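(* Let $S$ be a monoid and let $\mathbb{C}$ be a class of $S$-acts closed under taking subacts and products. Let $r_{\mathbb{C}}$ be the Hoehnke radical defined by $r_{\mathbb{C}}(A)=\bigwedge\{\chi\in\mathrm{Con}(A): A/\chi\in\mathbb{C}\}$, and let $\mathbb{R}_{r_{\mathbb{C}}}=\{A: r_{\mathbb{C}}(A)=\nabla_A\}$. Then: (1) $\mathbb{R}_{r_{\mathbb{C}}}$ is closed under homomorphic images; (2) $\mathbb{R}_{r_{\mathbb{C}}}$ has the inductive property; (3) $\mathbb{R}_{r_{\mathbb{C}}}$ is closed under Rees extensions.
   Context: An $S$-act over a monoid $S$ is a set $A$ with an action $(s,a)\mapsto sa$ satisfying $s(ta)=(st)a$ and $1a=a$; homomorphisms are action-preserving maps. An $S$-act is trivial if $|A|\le1$. Classes of $S$-acts are assumed closed under isomorphic copies and to contain all trivial $S$-acts. $\mathrm{Con}(A)$ is the lattice of congruences (action-compatible equivalence relations) on $A$, with $\nabla_A=A\times A$. A Rees congruence is a congruence each of whose classes is a subact or a singleton; $\Sigma_\rho$ denotes the set of classes of $\rho$ that are non-trivial subacts. A (normal) Hoehnke radical is an assignment $r$ of a congruence $r(A)$ to each $S$-act $A$ such that homomorphisms $f:A\to B$ map $r(A)$-related pairs to $r(B)$-related pairs and $r(A/r(A))$ is the diagonal. A class $\mathbb{C}'$ has the inductive property if for every ascending chain $(A_i)_{i\in I}$ of subacts (of some $S$-act) with all $A_i\in\mathbb{C}'$, the union $\bigcup_i A_i\in\mathbb{C}'$. $\mathbb{C}'$ is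 closed under Rees extensions if whenever $A$ has a Rees congruence $\chi$ with $\Sigma_\chi\subseteq\mathbb{C}'$ and $A/\chi\in\mathbb{C}'$, then $A\in\mathbb{C}'$. *)

From Stdlib Require Import FunctionalExtensionality PropExtensionality
  ProofIrrelevance IndefiniteDescription.

Set Implicit Arguments.
Unset Strict Implicit.

Record monoid := Monoid {
  mcar :> Type;
  mop : mcar -> mcar -> mcar;
  mone : mcar;
  mopA : forall x y z, mop x (mop y z) = mop (mop x y) z;
  mop1l : forall x, mop mone x = x;
  mop1r : forall x, mop x mone = x }.

Record act (S : monoid) := Act {
  acar :> Type;
  actf : S -> acar -> acar;
  actA : forall s t a, actf s (actf t a) = actf (@mop S s t) a;
  act1 : forall a, actf (@mone S) a = a }.

Arguments actf {S} _ _ _.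

Section Acts.
Variable S : monoid.

Definition is_hom (A B : act S) (f : A -> B) : Prop :=
  forall s a, f (actf A s a) = actf B s (f a).

Definition surjective (X Y : Type) (f : X -> Y) : Prop := forall y, exists x, f x = y.
Definition injective (X Y : Type) (f : X -> Y) : Prop := forall x y, f x = f y -> x = y.

Definition trivial_act (A : act S) : Prop := forall a b : A, a = b.

Definition is_congruence (A : act S) (R : A -> A -> Prop) : Prop :=
  (forall a, R a a) /\ (forall a b, R a b -> R b a) /\
  (forall a b c, R a b -> R b c -> R a c) /\
  (forall s a b, R a b -> R (actf A s a) (actf A s b)).

Definition subact_closed (A : act S) (P : A -> Prop) : Prop :=
  forall s a, P a -> P (actf A s a).

Section Subact.
Variables (A : act S) (P : A -> Prop) (HP : subact_closed P).
Definition sub_actf (s : S) (x : {a : A | P a}) : {a : A | P a} :=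
  exist _ (actf A s (proj1_sig x)) (HP s (proj2_sig x)).
Lemma sub_actA s t x : sub_actf s (sub_actf t x) = sub_actf (@mop S s t) x.
Proof. destruct x as [a Pa]; unfold sub_actf; simpl.
  apply subset_eq_compat. apply actA. Qed.
Lemma sub_act1 x : sub_actf (@mone S) x = x.
Proof. destruct x as [a Pa]; unfold sub_actf; simpl.
  apply subset_eq_compat. apply act1. Qed.
Definition subact_act : act S := Act sub_actA sub_act1.
End Subact.

Section Product.
Variables (I : Type) (F : I -> act S).
Definition prod_actf (s : S) (x : forall i, F i) : forall i, F i :=
  fun i => actf (F i) s (x i).
Lemma prod_actA s t x : prod_actf s (prod_actf t x) = prod_actf (@mop S s t) x.
Proof. apply functional_extensionality_dep; intro i; apply actA. Qed.
Lemma prod_act1 x : prod_actf (@mone S) x = x.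
Proof. apply functional_extensionality_dep; intro i; apply act1. Qed.
Definition prod_act : act S := Act prod_actA prod_act1.
End Product.

Section Quotient.
Variables (A : act S) (R : A -> A -> Prop) (HR : is_congruence R).
Definition quot_car := {X : A -> Prop | exists a, X = R a}.
Definition qclass (a : A) : quot_car := exist _ (R a) (ex_intro _ a eq_refl).
Definition qrep (X : quot_car) : A := proj1_sig (constructive_indefinite_description _ (proj2_sig X)).
Lemma qrepK X : qclass (qrep X) = X.
Proof. unfold qrep, qclass. destruct (constructive_indefinite_description _ _) as [a Ha].
  simpl. destruct X as [X HX]. simpl in *. subst. apply subset_eq_compat. reflexivity. Qed.
Lemma qclass_eq a b : R a b -> qclass a = qclass b.
Proof. destruct HR as [Hr [Hs [Ht _]]]. intro Hab. unfold qclass. apply subset_eq_compat.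
  apply functional_extensionality; intro c; apply propositional_extensionality; split; eauto. Qed.
Lemma qclass_rel a b : qclass a = qclass b -> R a b.
Proof. destruct HR as [Hr _]. intro E. assert (E' : R a = R b) by exact (f_equal (@proj1_sig _ _) E).
  rewrite E'. apply Hr. Qed.
Definition quot_actf (s : S) (X : quot_car) : quot_car := qclass (actf A s (qrep X)).
Lemma quot_actA s t X : quot_actf s (quot_actf t X) = quot_actf (@mop S s t) X.
Proof. unfold quot_actf. apply qclass_eq. rewrite <- actA. destruct HR as [_ [Hs [_ Hc]]].
  apply Hc. apply qclass_rel. rewrite qrepK. reflexivity. Qed.
Lemma quot_act1 X : quot_actf (@mone S) X = X.
Proof. unfold quot_actf. rewrite act1. apply qrepK. Qed.
Definition quot_act : act S := Act quot_actA quot_act1.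
End Quotient.

Definition act_class := act S -> Prop.

Definition iso_closed (C : act_class) : Prop :=
  forall (A B : act S) (f : A -> B), is_hom f -> injective f -> surjective f -> C A -> C B.
Definition contains_trivial (C : act_class) : Prop :=
  forall A : act S, trivial_act A -> C A.
Definition subacts_closed (C : act_class) : Prop :=
  forall (A : act S) (P : A -> Prop) (HP : subact_closed P), C A -> C (subact_act HP).
Definition products_closed (C : act_class) : Prop :=
  forall (I : Type) (F : I -> act S), (forall i, C (F i)) -> C (prod_act F).

Definition rad (C : act_class) (A : act S) (a b : A) : Prop :=
  forall (chi : A -> A -> Prop) (Hchi : is_congruence chi), C (quot_act Hchi) -> chi a b.

Definition radical_class (C : act_class) : act_class :=
  fun A => forall a b : A, rad C a b.

Definition hom_images_closed (D : act_class) : Prop :=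
  forall (A B : act S) (f : A -> B), is_hom f -> surjective f -> D A -> D B.

Lemma union_subact_closed (X : act S) (I : Type) (P : I -> X -> Prop) :
  (forall i, subact_closed (P i)) -> subact_closed (fun x => exists i, P i x).
Proof. intros H s a [i Hi]. exists i. apply H, Hi. Qed.

Definition inductive_prop (D : act_class) : Prop :=
  forall (X : act S) (I : Type) (P : I -> X -> Prop) (HP : forall i, subact_closed (P i)),
    (forall i j, (forall x, P i x -> P j x) \/ (forall x, P j x -> P i x)) ->
    (forall i, D (subact_act (HP i))) ->
    D (subact_act (union_subact_closed HP)).

Definition rees_congruence (A : act S) (chi : A -> A -> Prop) : Prop :=
  is_congruence chi /\
  forall a, subact_closed (chi a) \/ (forall b, chi a b -> b = a).

(** (3) closed under Rees extensions; the classes in Sigma_chi are the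
    classes chi a that are subacts with at least two elements *)
Definition rees_ext_closed (D : act_class) : Prop :=
  forall (A : act S) (chi : A -> A -> Prop) (Hchi : is_congruence chi),
    (forall a, subact_closed (chi a) \/ (forall b, chi a b -> b = a)) ->
    (forall a (Ha : subact_closed (chi a)),
        (exists b c, chi a b /\ chi a c /\ b <> c) -> D (subact_act Ha)) ->
    D (quot_act Hchi) -> D A.

End Acts.

(* A congruence theta with A/theta in C is the kernel of the quotient map
   A -> A/theta; conversely, for a homomorphism h : A -> B with B in C, the
   quotient of A by ker h is isomorphic to the image of h, a subact of B, and so
   lies in C.  Hence r_C(A) is the intersection of the kernels of all
   homomorphisms from A into members of C, and homomorphisms map r_C-related
   pairs to r_C-related pairs.  This gives (1) along a surjection and (2) along
   the inclusion of a member of the chain containing both points.  For (3), each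
   class of the Rees congruence chi is a singleton or a radical subact, so chi
   lies below r_C(A); then every theta with A/theta in C contains chi, and
   A/theta is a homomorphic image of the radical act A/chi. *)
From Stdlib Require Import ProofIrrelevance IndefiniteDescription Classical.

Set Implicit Arguments.
Unset Strict Implicit.

Section QuotientFacts.
Variables (S : monoid) (A : act S) (R : A -> A -> Prop) (HR : is_congruence R).

Lemma qrep_qclass a : R a (qrep (qclass R a)).
Proof. apply (qclass_rel HR). symmetry. apply qrepK. Qed.

Lemma qclass_hom : is_hom (B := quot_act HR) (qclass R).
Proof.
  intros s a. simpl. unfold quot_actf. apply (qclass_eq HR).
  destruct HR as [_ [_ [_ Hcomp]]]. apply Hcomp, qrep_qclass.
Qed.

End QuotientFacts.

Section QuotientLift.
Variables (S : monoid) (A : act S) (chi theta : A -> A -> Prop).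
Hypotheses (Hchi : is_congruence chi) (Htheta : is_congruence theta).
Hypothesis Hsub : forall x y, chi x y -> theta x y.

Lemma qclass_qrep_sub a : qclass theta (qrep (qclass chi a)) = qclass theta a.
Proof.
  apply (qclass_eq Htheta).
  destruct Htheta as [_ [Hsym _]]. apply Hsym, Hsub, (qrep_qclass Hchi).
Qed.

Lemma quot_lift_hom :
  is_hom (A := quot_act Hchi) (B := quot_act Htheta) (fun X => qclass theta (qrep X)).
Proof.
  intros s X. simpl. unfold quot_actf.
  rewrite qclass_qrep_sub.
  rewrite <- (qrepK X) at 2. rewrite qclass_qrep_sub.
  apply (qclass_hom Htheta).
Qed.

End QuotientLift.

Section Kernel.
Variables (S : monoid) (A B : act S) (h : A -> B) (Hh : is_hom h).

Definition kernel (a b : A) : Prop := h a = h b.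

Lemma kernel_congruence : is_congruence kernel.
Proof.
  unfold kernel. repeat split; intros *; congruence.
Qed.

Definition image (b : B) : Prop := exists a, b = h a.

Lemma image_subact : subact_closed image.
Proof. intros s b [a ->]. exists (actf A s a). symmetry. apply Hh. Qed.

Definition quot_kernel_to_image (X : quot_act kernel_congruence) : subact_act image_subact :=
  exist _ (h (qrep X)) (ex_intro _ (qrep X) eq_refl).

Lemma quot_kernel_to_image_hom : is_hom quot_kernel_to_image.
Proof.
  intros s X. apply subset_eq_compat. simpl. unfold quot_actf.
  rewrite <- Hh. symmetry. apply (qrep_qclass kernel_congruence).
Qed.

Lemma quot_kernel_to_image_injective : injective quot_kernel_to_image.
Proof.
  intros X Y E. apply (f_equal (@proj1_sig _ _)) in E.
  rewrite <- (qrepK X), <- (qrepK Y). apply (qclass_eq kernel_congruence), E.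
Qed.

Lemma quot_kernel_to_image_surjective : surjective quot_kernel_to_image.
Proof.
  intros [b [a ->]]. exists (qclass kernel a). apply subset_eq_compat. simpl.
  symmetry. apply (qrep_qclass kernel_congruence).
Qed.

End Kernel.

Section RadicalClass.
Variables (S : monoid) (C : act_class S).
Hypotheses (HC : iso_closed C) (HS : subacts_closed C).

Lemma iso_closed_inv (A B : act S) (f : A -> B) :
  is_hom f -> injective f -> surjective f -> C B -> C A.
Proof.
  intros Hf Hinj Hsur. pose (g := fun b => proj1_sig (constructive_indefinite_description _ (Hsur b))).
  assert (fg : forall b, f (g b) = b).
  { intro b. unfold g. destruct (constructive_indefinite_description _ _). assumption. }
  apply (HC (f := g)).
  - intros s b. apply Hinj. rewrite Hf, !fg. reflexivity.
  - intros b b' E. rewrite <- (fg b), <- (fg b'), E. reflexivity.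
  - intro a. exists (f a). apply Hinj, fg.
Qed.

Lemma quot_kernel_closed (A B : act S) (h : A -> B) (Hh : is_hom h) :
  C B -> C (quot_act (kernel_congruence Hh)).
Proof.
  intro CB. apply (iso_closed_inv (quot_kernel_to_image_hom (Hh := Hh))).
  - apply quot_kernel_to_image_injective.
  - apply quot_kernel_to_image_surjective.
  - apply HS, CB.
Qed.

Lemma rad_hom (A B : act S) (h : A -> B) (a b : A) :
  is_hom h -> C B -> rad C a b -> h a = h b.
Proof. intros Hh CB Hab. exact (Hab _ _ (quot_kernel_closed Hh CB)). Qed.

Lemma rad_hom_map (A B : act S) (f : A -> B) (a b : A) :
  is_hom f -> rad C a b -> rad C (f a) (f b).
Proof.
  intros Hf Hab theta Htheta CB. apply (qclass_rel Htheta).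
  apply (rad_hom (B := quot_act Htheta) (h := fun a => qclass theta (f a))); [| exact CB | exact Hab].
  intros s x. simpl. rewrite Hf. apply (qclass_hom Htheta).
Qed.

Lemma rad_refl (A : act S) (a : A) : rad C a a.
Proof. intros chi [Hrefl _] _. apply Hrefl. Qed.

Lemma radical_of_quot (A : act S) (chi : A -> A -> Prop) (Hchi : is_congruence chi) :
  (forall a b, chi a b -> rad C a b) ->
  radical_class C (quot_act Hchi) -> radical_class C A.
Proof.
  intros Hrad Hq a b theta Htheta CA.
  assert (Hsub : forall x y, chi x y -> theta x y) by (intros x y H; exact (Hrad x y H _ _ CA)).
  apply (qclass_rel Htheta).
  rewrite <- (qclass_qrep_sub Hchi Htheta Hsub a), <- (qclass_qrep_sub Hchi Htheta Hsub b).
  exact (rad_hom (quot_lift_hom (Hchi := Hchi) Htheta Hsub) CA (Hq _ _)).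
Qed.

Lemma radical_hom_images_closed : hom_images_closed (radical_class C).
Proof.
  intros A B f Hf Hsur HA b b'.
  destruct (Hsur b) as [a <-], (Hsur b') as [a' <-].
  apply rad_hom_map; auto.
Qed.

Lemma radical_inductive : inductive_prop (radical_class C).
Proof.
  intros X I P HP Hchain HD [x [i Hx]] [y [j Hy]].
  assert (Hk : exists k, P k x /\ P k y).
  { destruct (Hchain i j) as [Hij | Hji]; [exists j | exists i]; auto. }
  destruct Hk as [k [Hkx Hky]].
  pose (incl := fun p : subact_act (HP k) =>
    exist _ (proj1_sig p) (ex_intro _ k (proj2_sig p)) : subact_act (union_subact_closed HP)).
  assert (Hincl : is_hom incl) by (intros s p; apply subset_eq_compat; reflexivity).
  rewrite (proof_irrelevance _ (ex_intro _ i Hx) (ex_intro _ k Hkx)),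
    (proof_irrelevance _ (ex_intro _ j Hy) (ex_intro _ k Hky)).
  exact (rad_hom_map Hincl (HD k (exist _ x Hkx) (exist _ y Hky))).
Qed.

Lemma radical_rees_ext_closed : rees_ext_closed (radical_class C).
Proof.
  intros A chi Hchi Hrees Hsig.
  apply radical_of_quot. intros x y Hxy.
  destruct (classic (x = y)) as [<- | Hne]; [apply rad_refl |].
  destruct (Hrees x) as [Hx | Hsingle]; [| contradiction (Hne (eq_sym (Hsingle y Hxy)))].
  destruct Hchi as [Hrefl _].
  assert (Hincl : is_hom (fun p : subact_act Hx => proj1_sig p)) by (intros s p; reflexivity).
  assert (Hnontrivial : exists b c, chi x b /\ chi x c /\ b <> c) by (exists x, y; auto).
  exact (rad_hom_map Hincl (Hsig x Hx Hnontrivial (exist _ x (Hrefl x)) (exist _ y Hxy))).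
Qed.

End RadicalClass.

Theorem lemma2p4 (S : monoid) (C : act_class S) :
  iso_closed C -> contains_trivial C -> subacts_closed C -> products_closed C ->
  hom_images_closed (radical_class C) /\
  inductive_prop (radical_class C) /\
  rees_ext_closed (radical_class C).
Proof.
  intros HC _ HS _. repeat split.
  - exact (radical_hom_images_closed HC HS).
  - exact (radical_inductive HC HS).
  - exact (radical_rees_ext_closed HC HS).
Qed.
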